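(* Let $m\in A_n$ be a monomial with $\mathrm{mdeg}(m)=(\alpha,\beta)$. Then: (i) $g_+(m)$ and $g_-(m)$ commute if and only if $\alpha=\beta$; (ii) if $g_+(m)$ and $g_-(m)$ do not commute, then $\deg([g_+(m),g_-(m)])=\deg(g_+(m))+\deg(g_-(m))-2=:d$; (iii) in that case $$\deg\Big([g_+(m),g_-(m)]+2i\sum_{k=1}^n(\alpha_k^2-\beta_k^2)\,a^{(\alpha+\beta-e_k,\;\alpha+\beta-e_k)}\Big)<d,$$ where the summands with $\alpha_k+\beta_k=0$ vanish.
   Context: Fix $n\ge 1$. The Weyl algebra $A_n$ is the unital associative $\mathbb{C}$-algebra generated by $a_1,\dots,a_n,a_1^\dagger,\dots,a_n^\dagger$ subject to $[a_i,a_j^\dagger]=\delta_{ij}$ and $[a_i,a_j]=[a_i^\dagger,a_j^\dagger]=0$. For $\gamma=(\alpha,\beta)\in\mathbb N_0^{2n}$ set $a^{\gamma}=(a_1^\dagger)^{\alpha_1}\cdots(a_n^\dagger)^{\alpha_n}a_1^{\beta_1}\cdots a_n^{\beta_n}$; these form a $\mathbb C$-basis of $A_n$; $|\gamma|=\sum_j\alpha_j+\sum_j\beta_j$. For $0\neq g\in A_n$, $\deg(g)$ is the largest $|\gamma|$ such that $a^\gamma$ has nonzero coefficient in the expansion of $g$; $\deg(0)=-\infty$. A monomial is a finite product (in any order) of the generators $a_j,a_j^\dagger$; its multi-degree $\mathrm{mdeg}(m)=(\alpha,\beta)$ records the number $\alpha_j$ of factors $a_j^\dagger$ and $\beta_j$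 of factors $a_j$. The adjoint $\dagger$ is the conjugate-linear anti-automorphism with $(a_j)^\dagger=a_j^\dagger$, $(a_j^\dagger)^\dagger=a_j$, $1^\dagger=1$. $g_+(m)=i(m^\dagger+m)$, $g_-(m)=m^\dagger-m$. $e_k\in\mathbb N_0^n$ denotes the $k$-th unit vector. *)

From HB Require Import structures.
From mathcomp Require Import all_boot all_order all_algebra.
From mathcomp Require Import mpoly.
Set Implicit Arguments. Unset Strict Implicit. Unset Printing Implicit Defensive.
Import Order.TTheory GRing.Theory Num.Theory.
Local Open Scope ring_scope.

(* The Weyl algebra A_n over C is modelled by its normal-ordered basis:
   an element g is stored as its coefficient vector w.r.t. the basis
   a^(alpha,beta) = (a_1^+)^alpha_1 ... (a_n^+)^alpha_n a_1^beta_1 ... a_n^beta_n.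
   The underlying C-vector space is {mpoly C[n + n]}: the basis vector a^(alpha,beta)
   is the mpoly monomial 'X_[m] where m (lshift j) = alpha_j, m (rshift j) = beta_j.
   The (noncommutative) Weyl product [wmul] is defined below via the
   normal-ordering formula; the commutative mpoly product is NOT the algebra
   product and is only used to assemble basis monomials of distinct modes. *)

Section Weyl.
Variable C : numClosedFieldType.
Variable n : nat.

Definition W := {mpoly C[n + n]}.

Definition mcr (u : 'X_{1..n + n}) (j : 'I_n) : nat := u (lshift n j).
Definition man (u : 'X_{1..n + n}) (j : 'I_n) : nat := u (rshift n j).

Definition nbasis (alpha beta : 'I_n -> nat) : W :=
  'X_[[multinom (match split i with inl j => alpha j | inr j => beta j end) | i < n + n]].

(* single mode: (a^+^a a^b)(a^+^c a^d) = sum_k C(b,k) C(c,k) k! a^+^(a+c-k) a^(b+d-k) *)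
Definition mono_mul (u v : 'X_{1..n + n}) : W :=
  \prod_(j < n)
    \sum_(k < (minn (man u j) (mcr v j)).+1)
      (('C(man u j, k) * 'C(mcr v j, k) * k`!)%:R : C) *:
        ('X_(lshift n j) ^+ (mcr u j + mcr v j - k) *
         'X_(rshift n j) ^+ (man u j + man v j - k)).

Definition wmul (p q : W) : W :=
  \sum_(u <- msupp p) \sum_(v <- msupp q) (p@_u * q@_v) *: mono_mul u v.

Definition wcomm (p q : W) : W := wmul p q - wmul q p.

(* degree: None stands for -oo (the zero element) *)
Definition wdeg (p : W) : option nat :=
  if p == 0 then None else Some (msize p).-1.

Definition wdeg_lt (p : W) (d : nat) : Prop :=
  match wdeg p with None => True | Some e => (e < d)%N end.

(* generators: Cr j = a_j^dagger, An j = a_j *)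
Inductive gen := Cr of 'I_n | An of 'I_n.

Definition gen_val (g : gen) : W :=
  match g with Cr j => 'X_(lshift n j) | An j => 'X_(rshift n j) end.

Definition word_val (m : seq gen) : W := foldr (fun g acc => wmul (gen_val g) acc) 1 m.

Definition mdeg_cr (m : seq gen) (j : 'I_n) : nat :=
  count (fun g => if g is Cr i then i == j else false) m.
Definition mdeg_an (m : seq gen) (j : 'I_n) : nat :=
  count (fun g => if g is An i then i == j else false) m.

(* the adjoint is a conjugate-linear anti-automorphism swapping a_j and a_j^dagger;
   on a monomial (coefficient 1) it reverses the word and swaps the letters *)
Definition gen_adj (g : gen) : gen :=
  match g with Cr j => An j | An j => Cr j end.
Definition word_adj (m : seq gen) : seq gen := rev (map gen_adj m).

Definition gplus (m : seq gen) : W := 'i *: (word_val (word_adj m) + word_val m).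
Definition gminus (m : seq gen) : W := word_val (word_adj m) - word_val m.

End Weyl.

(* Normal ordering writes the product of basis elements a^u a^v as a^(u+v) plus the
   terms obtained by k >= 1 contractions of some a_j of u with some a_j^+ of v, each
   of degree |u| + |v| - 2k and each preserving alpha_j - beta_j.  Hence m is
   a^(alpha,beta) plus lower terms and all its basis elements have the same
   alpha_j - beta_j; likewise m^+ is a^(beta,alpha) plus lower terms, and
   [g_+(m), g_-(m)] = 2i [m, m^+].  If alpha = beta, both m and m^+ are spanned by
   diagonal basis elements, which commute.  Otherwise only single contractions between
   the two leading terms reach degree d = 2(|alpha| + |beta|) - 2, where they give the
   coefficient -2i (alpha_k^2 - beta_k^2) at a^(alpha+beta-e_k, alpha+beta-e_k); these
   basis elements are pairwise distinct and some coefficient is nonzero. *)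

From HB Require Import structures.
From mathcomp Require Import all_boot all_order all_algebra.
From mathcomp Require Import mpoly ssrcomplements.
From mathcomp Require Import zify ring.
Set Implicit Arguments. Unset Strict Implicit. Unset Printing Implicit Defensive.
Import Order.TTheory GRing.Theory Num.Theory.
Local Open Scope ring_scope.

Lemma sum_ord_widen (V : nmodType) (N M : nat) (F : nat -> V) : (N <= M)%N ->
  (forall k, (N <= k < M)%N -> F k = 0) ->
  \sum_(k < N) F k = \sum_(k < M) F k.
Proof.
move=> le_NM F0; rewrite (big_ord_widen _ F le_NM) big_mkcond /=.
apply: eq_bigr => k _; case: ifPn => // /negbTE ltkN.
by rewrite F0 // leqNgt ltkN ltn_ord.
Qed.

Lemma sum_sub_delta n (x : 'I_n -> nat) k : (0 < x k)%N ->
  (\sum_(i < n) (x i - (i == k)) + 1 = \sum_(i < n) x i)%N.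
Proof.
move=> xk; rewrite (bigD1 k) //= [RHS](bigD1 k) //= eqxx.
rewrite (eq_bigr x) => [|i /negbTE->]; last exact: subn0.
by change (nat_of_bool true) with 1%N; lia.
Qed.

Section Contraction.
Variables (C : numClosedFieldType) (n : nat).
Implicit Types (u v w : 'X_{1..n + n}) (K : nat).

Definition mode (i : 'I_(n + n)) : 'I_n :=
  match split i with inl j => j | inr j => j end.

Lemma mode_lshift j : mode (lshift n j) = j.
Proof. by rewrite /mode (unsplitK (inl j)). Qed.

Lemma mode_rshift j : mode (rshift n j) = j.
Proof. by rewrite /mode (unsplitK (inr j)). Qed.

Lemma mcrD u v j : mcr (u + v)%MM j = (mcr u j + mcr v j)%N.
Proof. exact: mnmDE. Qed.

Lemma manD u v j : man (u + v)%MM j = (man u j + man v j)%N.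
Proof. exact: mnmDE. Qed.

Lemma mdeg_split u : mdeg u = (\sum_(j < n) mcr u j + \sum_(j < n) man u j)%N.
Proof. by rewrite mdegE big_split_ord. Qed.

Lemma mcr_le_mdeg u j : (mcr u j <= mdeg u)%N.
Proof. by rewrite mdegE (bigD1 (lshift n j)) //= leq_addr. Qed.

Lemma man_le_mdeg u j : (man u j <= mdeg u)%N.
Proof. by rewrite mdegE (bigD1 (rshift n j)) //= leq_addr. Qed.

(* A contraction [f] pairs [f j] annihilators a_j of [u] with as many creators
   a_j^+ of [v]: [contr_coef] counts the pairings, [contr_mnm] is what is left. *)
Definition contr_coef K u v (f : {ffun 'I_n -> 'I_K}) : nat :=
  \prod_(j < n) ('C(man u j, f j) * 'C(mcr v j, f j) * (f j)`!).

Definition contr_mnm K u v (f : {ffun 'I_n -> 'I_K}) : 'X_{1..n + n} :=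
  [multinom (u i + v i - f (mode i))%N | i < n + n].

Lemma mcr_contr_mnm K u v (f : {ffun 'I_n -> 'I_K}) j :
  mcr (contr_mnm u v f) j = (mcr u j + mcr v j - f j)%N.
Proof. by rewrite /mcr mnmE mode_lshift. Qed.

Lemma man_contr_mnm K u v (f : {ffun 'I_n -> 'I_K}) j :
  man (contr_mnm u v f) j = (man u j + man v j - f j)%N.
Proof. by rewrite /man mnmE mode_rshift. Qed.

Lemma contr_mnmC K u v (f : {ffun 'I_n -> 'I_K}) : contr_mnm u v f = contr_mnm v u f.
Proof. by apply/mnmP => i; rewrite !mnmE addnC. Qed.

Lemma mono_mul_expand K u v : (mdeg u + mdeg v < K)%N ->
  mono_mul C u v =
  \sum_(f : {ffun 'I_n -> 'I_K}) (contr_coef u v f)%:R *: 'X_[contr_mnm u v f].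
Proof.
move=> ltK; pose T j k : W C n := (('C(man u j, k) * 'C(mcr v j, k) * k`!)%:R : C) *:
   'X_[U_(lshift n j) *+ (mcr u j + mcr v j - k) + U_(rshift n j) *+ (man u j + man v j - k)].
have modeE j : \sum_(k < (minn (man u j) (mcr v j)).+1)
   ((('C(man u j, k) * 'C(mcr v j, k) * k`!)%:R : C) *:
      ('X_(lshift n j) ^+ (mcr u j + mcr v j - k) *
       'X_(rshift n j) ^+ (man u j + man v j - k))) = \sum_(k < K) T j k.
  rewrite (eq_bigr (fun k : 'I_ _ => T j k)); last first.
    by move=> k _; rewrite /T !mpolyXn -mpolyXD.
  apply: sum_ord_widen => [|k /andP[lt_min _]].
    apply: leq_ltn_trans (geq_minl _ _) _; apply: leq_ltn_trans (man_le_mdeg u j) _.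
    exact: leq_ltn_trans (leq_addr _ _) ltK.
  by rewrite /T; move: lt_min; rewrite gtn_min => /orP[] /bin_small->;
    rewrite ?mul0n ?muln0 scale0r.
rewrite /mono_mul (eq_bigr _ (fun j _ => modeE j)) bigA_distr_bigA /=.
apply: eq_bigr => f _; rewrite scaler_prod -natr_prod mprodXE.
congr (_ *: 'X_[_]); apply/mnmP => i; rewrite mnm_sumE mnmE.
rewrite -[i]splitK; case: (split i) => j /=.
- rewrite (bigD1 j) //= big1 => [|k /negbTE nkj].
    by rewrite mnmDE !mulmnE !mnm1E eqxx eq_rlshift mode_lshift mul1n mul0n !addn0.
  by rewrite mnmDE !mulmnE !mnm1E eq_lshift eq_rlshift nkj !mul0n.
- rewrite (bigD1 j) //= big1 => [|k /negbTE nkj].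
    by rewrite mnmDE !mulmnE !mnm1E eqxx eq_lrshift mode_rshift mul1n mul0n addn0.
  by rewrite mnmDE !mulmnE !mnm1E eq_rshift eq_lrshift nkj !mul0n.
Qed.

Lemma mcoeff_mono_mul K u v w : (mdeg u + mdeg v < K)%N ->
  (mono_mul C u v)@_w =
  \sum_(f : {ffun 'I_n -> 'I_K}) (contr_coef u v f)%:R * (contr_mnm u v f == w)%:R.
Proof.
move=> ltK; rewrite (mono_mul_expand ltK) raddf_sum.
by apply: eq_bigr => f _; rewrite /= mcoeffZ mcoeffX.
Qed.

Lemma contr_coef_neq0 K u v (f : {ffun 'I_n -> 'I_K}) j : contr_coef u v f != 0%N ->
  (f j <= man u j)%N /\ (f j <= mcr v j)%N.
Proof.
rewrite /contr_coef (bigD1 j) //= !muln_eq0 !negb_or -!lt0n !bin_gt0.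
by case/andP => /andP [/andP [-> ->] _].
Qed.

Lemma mdeg_contr_mnm K u v (f : {ffun 'I_n -> 'I_K}) : contr_coef u v f != 0%N ->
  (mdeg (contr_mnm u v f) + 2 * \sum_(j < n) f j = mdeg u + mdeg v)%N.
Proof.
move=> nz; have le_f j := contr_coef_neq0 j nz.
have cancel (a b : 'I_n -> nat) : (forall j, f j <= a j + b j)%N ->
    (\sum_(j < n) (a j + b j - f j) + \sum_(j < n) f j =
     \sum_(j < n) a j + \sum_(j < n) b j)%N.
  by move=> le_ab; rewrite -!big_split; apply: eq_bigr => j _; exact: subnK.
have e_cr : (\sum_(j < n) mcr (contr_mnm u v f) j = \sum_(j < n) (mcr u j + mcr v j - f j))%N.
  by apply: eq_bigr => j _; exact: mcr_contr_mnm.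
have e_an : (\sum_(j < n) man (contr_mnm u v f) j = \sum_(j < n) (man u j + man v j - f j))%N.
  by apply: eq_bigr => j _; exact: man_contr_mnm.
have := cancel (mcr u) (mcr v) (fun j => leq_trans (le_f j).2 (leq_addl _ _)).
have := cancel (man u) (man v) (fun j => leq_trans (le_f j).1 (leq_addr _ _)).
rewrite !mdeg_split e_cr e_an; lia.
Qed.

Definition contr0 K : {ffun 'I_n -> 'I_K.+1} := [ffun => ord0].

Definition contr1 K (j : 'I_n) : {ffun 'I_n -> 'I_K.+2} :=
  [ffun i => if i == j then Ordinal (isT : (1 < K.+2)%N) else ord0].

Lemma contr_coef0 K u v : contr_coef u v (contr0 K) = 1%N.
Proof. by rewrite /contr_coef big1 // => j _; rewrite ffunE !bin0. Qed.

Lemma contr_mnm0 K u v : contr_mnm u v (contr0 K) = (u + v)%MM.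
Proof. by apply/mnmP => i; rewrite mnmE mnmDE ffunE subn0. Qed.

Lemma contr_coef1 K u v j : contr_coef u v (contr1 K j) = (man u j * mcr v j)%N.
Proof.
rewrite /contr_coef (bigD1 j) //= big1 => [|i /negbTE nij]; last by rewrite ffunE nij !bin0.
by rewrite ffunE eqxx !bin1 !muln1.
Qed.

Definition lower_mode (j : 'I_n) w : 'X_{1..n + n} :=
  [multinom (w i - (mode i == j))%N | i < n + n].

Lemma contr_mnm1 K u v j : contr_mnm u v (contr1 K j) = lower_mode j (u + v)%MM.
Proof. by apply/mnmP => i; rewrite !mnmE ffunE; case: eqP. Qed.

Lemma contr1_inj K : injective (contr1 K).
Proof. by move=> i j /ffunP /(_ i); rewrite !ffunE eqxx; case: eqP. Qed.

Lemma contr_sum_eq0 K (f : {ffun 'I_n -> 'I_K.+1}) :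
  (\sum_(j < n) f j = 0)%N -> f = contr0 K.
Proof.
move/eqP; rewrite sum_nat_eq0 => /forallP f0; apply/ffunP => j.
by rewrite ffunE; apply/val_inj/eqP/f0.
Qed.

Lemma contr_sum_eq1 K (f : {ffun 'I_n -> 'I_K.+2}) :
  (\sum_(j < n) f j = 1)%N -> exists j, f = contr1 K j.
Proof.
move=> sum1; have [j f_j] : exists j, (0 < f j)%N.
  apply/existsP; apply: contraT; rewrite negb_exists => /forallP f0.
  by move: sum1; rewrite big1 // => j _; apply/eqP; rewrite -leqn0 leqNgt f0.
move: sum1; rewrite (bigD1 j) //= => sum1.
have fj1 : f j = 1%N :> nat by lia.
have /eqP := sum1; rewrite fj1 add1n eqSS sum_nat_eq0 => /forallP rest0.
exists j; apply/ffunP => i; rewrite ffunE; apply/val_inj => /=.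
by case: eqP => [->|/eqP nij] //; apply/eqP; move: (rest0 i); rewrite nij.
Qed.

End Contraction.

Section MonomialProduct.
Variables (C : numClosedFieldType) (n : nat).
Implicit Types (u v w : 'X_{1..n + n}).

(* A contraction [f] reaching [w] has [2 * \sum_j f j = mdeg u + mdeg v - mdeg w],
   so here only the empty one does. *)
Lemma mcoeff_mono_mul_lead u v w : (mdeg u + mdeg v < (mdeg w).+2)%N ->
  (mono_mul C u v)@_w = ((u + v)%MM == w)%:R.
Proof.
move=> hw; set K := (mdeg u + mdeg v)%N.
rewrite (@mcoeff_mono_mul C n K.+1 u v w (ltnSn K)) (bigD1 (contr0 n K)) //=.
rewrite contr_coef0 contr_mnm0 mul1r big1 ?addr0 // => f nf0.
have [-> | nz] := eqVneq (contr_coef u v f) 0%N; first by rewrite mul0r.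
case: eqP => [fw | _]; last by rewrite mulr0.
have := mdeg_contr_mnm nz; rewrite fw => hdeg.
by rewrite (@contr_sum_eq0 n K f) ?eqxx in nf0; lia.
Qed.

Lemma mcoeff_mono_mulC u v w : (mdeg u + mdeg v < (mdeg w).+2)%N ->
  (mono_mul C u v)@_w = (mono_mul C v u)@_w.
Proof. by move=> hw; rewrite !mcoeff_mono_mul_lead 1?addmC // addnC. Qed.

(* Two degrees down, only single contractions survive in the commutator. *)
Lemma mcoeff_mono_mul_comm u v w : (mdeg u + mdeg v <= (mdeg w).+2)%N ->
  (mono_mul C u v)@_w - (mono_mul C v u)@_w =
  \sum_(j < n) (lower_mode j (u + v)%MM == w)%:R *
     ((man u j * mcr v j)%:R - (man v j * mcr u j)%:R).
Proof.
move=> hw; set K := (mdeg u + mdeg v)%N.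
have ltK : (K < K.+2)%N by [].
have ltK' : (mdeg v + mdeg u < K.+2)%N by rewrite addnC.
rewrite (mcoeff_mono_mul C w ltK) (mcoeff_mono_mul C w ltK') -sumrB.
under eq_bigr => f _ do rewrite [contr_mnm v u f]contr_mnmC -mulrBl.
rewrite (bigID (mem [set contr1 K j | j : 'I_n])) /= [X in _ + X]big1 ?addr0.
  rewrite big_imset /=; last by move=> i j _ _ /contr1_inj.
  by apply: eq_bigr => j _; rewrite !contr_coef1 contr_mnm1 mulrC.
move=> f notunit; case: eqP => [fw | _]; last by rewrite mulr0.
case: (boolP ((contr_coef u v f != 0) || (contr_coef v u f != 0))%N) => [nz|]; last first.
  by rewrite negb_or !negbK => /andP[/eqP-> /eqP->]; rewrite subrr mul0r.
have small : (\sum_(j < n) f j <= 1)%N.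
  case/orP: nz => nz; have := mdeg_contr_mnm nz;
  by rewrite ?[contr_mnm v u f]contr_mnmC fw; lia.
move: small; rewrite leq_eqVlt ltnS leqn0.
case/orP => [/eqP/contr_sum_eq1[j fj] | /eqP/contr_sum_eq0->].
  by rewrite fj imset_f in notunit.
by rewrite !contr_coef0 subrr mul0r.
Qed.

Lemma mono_mul_charge u v w : (mono_mul C u v)@_w != 0 -> forall j,
  (mcr w j + (man u j + man v j) = man w j + (mcr u j + mcr v j))%N.
Proof.
move=> nz j; apply/eqP; apply: contraR nz => charge; apply/eqP.
rewrite (mcoeff_mono_mul C w (ltnSn _)) big1 // => f _.
have [-> | nz] := eqVneq (contr_coef u v f) 0%N; first by rewrite mul0r.
case: eqP => [fw | _]; last by rewrite mulr0.
have [le_u le_v] := contr_coef_neq0 j nz.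
move: charge; rewrite -fw mcr_contr_mnm man_contr_mnm; lia.
Qed.

Lemma mono_mul_diagC u v :
  (forall j, mcr u j = man u j) -> (forall j, mcr v j = man v j) ->
  mono_mul C u v = mono_mul C v u.
Proof.
move=> du dv; apply: eq_bigr => j _; rewrite -!du -!dv minnC.
by apply: eq_bigr => k _; rewrite (mulnC 'C(mcr u j, k)) (addnC (mcr u j)).
Qed.

End MonomialProduct.

Section WeylProduct.
Variables (C : numClosedFieldType) (n : nat).
Implicit Types (P Q : W C n) (u v w : 'X_{1..n + n}).

Lemma mcoeff_wmul P Q w : (wmul P Q)@_w =
  \sum_(u <- msupp P) \sum_(v <- msupp Q) P@_u * Q@_v * (mono_mul C u v)@_w.
Proof.
rewrite raddf_sum; apply: eq_bigr => u _; rewrite /= raddf_sum.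
by apply: eq_bigr => v _; rewrite /= mcoeffZ.
Qed.

Lemma wmulX u v : wmul ('X_[u] : W C n) 'X_[v] = mono_mul C u v.
Proof. by rewrite /wmul !msuppX !big_seq1 !mcoeffX !eqxx mul1r scale1r. Qed.

Lemma mcoeff_wmulX u P w :
  (wmul 'X_[u] P)@_w = \sum_(v <- msupp P) P@_v * (mono_mul C u v)@_w.
Proof.
rewrite mcoeff_wmul msuppX big_seq1; apply: eq_bigr => v _.
by rewrite mcoeffX eqxx mul1r.
Qed.

Lemma wmulE P Q k : (msize P <= k)%N -> (msize Q <= k)%N ->
  wmul P Q = \sum_(u : 'X_{1..(n + n) < k}) \sum_(v : 'X_{1..(n + n) < k})
     (P@_u * Q@_v) *: mono_mul C u v.
Proof.
move=> szP szQ; pose I : subFinType _ := 'X_{1..(n + n) < k}.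
have in_I (R : W C n) : (msize R <= k)%N -> forall m, m \in msupp R -> (mdeg m < k)%N.
  by move=> szR m /msize_mdeg_lt /leq_trans; apply.
rewrite /wmul (big_mksub I) ?msupp_uniq //; last exact: in_I szP.
rewrite big_rmcond /= => [|u]; last first.
  by move/memN_msupp_eq0 => ->; rewrite big1 // => v _; rewrite mul0r scale0r.
apply: eq_bigr => u _; rewrite (big_mksub I) ?msupp_uniq //; last exact: in_I szQ.
rewrite big_rmcond //= => v.
by move/memN_msupp_eq0 => ->; rewrite mulr0 scale0r.
Qed.

Lemma wmulDl P1 P2 Q : wmul (P1 + P2) Q = wmul P1 Q + wmul P2 Q.
Proof.
set k := (msize P1 + msize P2 + msize Q)%N.
have sz12 : (msize (P1 + P2) <= k)%N.
  by apply: leq_trans (msizeD_le _ _) _; rewrite geq_max /k; apply/andP; split; lia.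
rewrite (wmulE sz12) ?(wmulE (_ : msize P1 <= k)%N) ?(wmulE (_ : msize P2 <= k)%N);
  try by rewrite /k; lia.
rewrite -big_split; apply: eq_bigr => u _; rewrite -big_split; apply: eq_bigr => v _.
by rewrite mcoeffD mulrDl scalerDl.
Qed.

Lemma wmulDr P Q1 Q2 : wmul P (Q1 + Q2) = wmul P Q1 + wmul P Q2.
Proof.
set k := (msize P + msize Q1 + msize Q2)%N.
have sz12 : (msize (Q1 + Q2) <= k)%N.
  by apply: leq_trans (msizeD_le _ _) _; rewrite geq_max /k; apply/andP; split; lia.
rewrite (wmulE _ sz12) ?(wmulE _ (_ : msize Q1 <= k)%N) ?(wmulE _ (_ : msize Q2 <= k)%N);
  try by rewrite /k; lia.
rewrite -big_split; apply: eq_bigr => u _; rewrite -big_split; apply: eq_bigr => v _.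
by rewrite mcoeffD mulrDr scalerDl.
Qed.

Lemma wmulZl c P Q : wmul (c *: P) Q = c *: wmul P Q.
Proof.
set k := (msize P + msize Q)%N.
have szP : (msize P <= k)%N by rewrite /k; lia.
have szQ : (msize Q <= k)%N by rewrite /k; lia.
rewrite (wmulE (leq_trans (msizeZ_le _ _) szP) szQ) (wmulE szP szQ) scaler_sumr.
apply: eq_bigr => u _; rewrite scaler_sumr; apply: eq_bigr => v _.
by rewrite mcoeffZ scalerA mulrA.
Qed.

Lemma wmulZr c P Q : wmul P (c *: Q) = c *: wmul P Q.
Proof.
set k := (msize P + msize Q)%N.
have szP : (msize P <= k)%N by rewrite /k; lia.
have szQ : (msize Q <= k)%N by rewrite /k; lia.
rewrite (wmulE szP (leq_trans (msizeZ_le _ _) szQ)) (wmulE szP szQ) scaler_sumr.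
apply: eq_bigr => u _; rewrite scaler_sumr; apply: eq_bigr => v _.
by rewrite mcoeffZ scalerA mulrCA.
Qed.

Lemma wmulNl P Q : wmul (- P) Q = - wmul P Q.
Proof. by rewrite -scaleN1r wmulZl scaleN1r. Qed.

Lemma wmulNr P Q : wmul P (- Q) = - wmul P Q.
Proof. by rewrite -scaleN1r wmulZr scaleN1r. Qed.

Lemma wcommDl P1 P2 Q : wcomm (P1 + P2) Q = wcomm P1 Q + wcomm P2 Q.
Proof. by rewrite /wcomm wmulDl wmulDr addrACA opprD. Qed.

Lemma wcommDr P Q1 Q2 : wcomm P (Q1 + Q2) = wcomm P Q1 + wcomm P Q2.
Proof. by rewrite /wcomm wmulDl wmulDr addrACA opprD. Qed.

Lemma wcomm_plus_minus P Q :
  wcomm ('i *: (P + Q)) (P - Q) = 'i *: ((wmul Q P - wmul P Q) *+ 2).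
Proof.
rewrite /wcomm !(wmulZl, wmulZr, wmulDl, wmulDr, wmulNl, wmulNr).
by rewrite -!mul_mpolyC; ring.
Qed.

Definition deg_le P (d : nat) := forall w, (d < mdeg w)%N -> P@_w = 0.

Lemma msupp_deg_le P d u : deg_le P d -> u \in msupp P -> (mdeg u <= d)%N.
Proof. by move=> hP; apply: contraTT; rewrite -ltnNge mcoeff_msupp negbK => /hP ->. Qed.

Lemma mcoeff_wcomm_deg_le P Q dP dQ w : deg_le P dP -> deg_le Q dQ ->
  (dP + dQ < (mdeg w).+2)%N -> (wcomm P Q)@_w = 0.
Proof.
move=> hP hQ hw; rewrite mcoeffB !mcoeff_wmul [X in _ - X]exchange_big /= -sumrB.
rewrite big1_seq // => u /andP[_ Pu]; rewrite -sumrB big1_seq // => v /andP[_ Qv].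
rewrite mcoeff_mono_mulC ?(mulrC Q@_v) ?subrr //.
exact: leq_ltn_trans (leq_add (msupp_deg_le hP Pu) (msupp_deg_le hQ Qv)) hw.
Qed.

Definition supp_diag P := forall w, P@_w != 0 -> forall j, mcr w j = man w j.

Lemma wcomm_supp_diag P Q : supp_diag P -> supp_diag Q -> wcomm P Q = 0.
Proof.
move=> dP dQ; apply/eqP; rewrite subr_eq0 /wmul [X in _ == X]exchange_big /=.
apply/eqP/eq_big_seq => u; rewrite mcoeff_msupp => Pu; apply: eq_big_seq => v.
by rewrite mcoeff_msupp => Qv; rewrite (mono_mul_diagC C (dP u Pu) (dQ v Qv)) mulrC.
Qed.

Definition lead_monic P g :=
  P@_g = 1 /\ forall w, w != g -> (mdeg g <= mdeg w)%N -> P@_w = 0.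

Lemma lead_monic_deg_le P g : lead_monic P g -> deg_le P (mdeg g).
Proof.
move=> [_ Pw] w hw; rewrite Pw ?(ltnW hw) //.
by apply: contraTneq hw => ->; rewrite ltnn.
Qed.

Lemma lead_monic_sub_deg_le P g : lead_monic P g -> deg_le (P - 'X_[g]) (mdeg g).-1.
Proof.
move=> [Pg Pw] w hw; rewrite mcoeffB mcoeffX.
have [<- | ngw] := eqVneq g w; first by rewrite Pg subrr.
by rewrite Pw 1?eq_sym ?subr0 //; lia.
Qed.

Lemma mcoeff_wcomm_lead P Q gP gQ w : lead_monic P gP -> lead_monic Q gQ ->
  (0 < mdeg gP)%N -> (0 < mdeg gQ)%N -> (mdeg gP + mdeg gQ <= (mdeg w).+2)%N ->
  (wcomm P Q)@_w = (mono_mul C gP gQ)@_w - (mono_mul C gQ gP)@_w.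
Proof.
move=> lP lQ gP0 gQ0 hw.
have degX g : deg_le ('X_[g] : W C n) (mdeg g).
  by move=> u hu; rewrite mcoeffX; case: eqP hu => // ->; rewrite ltnn.
have -> : wcomm P Q = wcomm (P - 'X_[gP]) (Q - 'X_[gQ]) + wcomm (P - 'X_[gP]) 'X_[gQ]
   + (wcomm 'X_[gP] (Q - 'X_[gQ]) + wcomm 'X_[gP] 'X_[gQ]).
  by rewrite -!wcommDr -wcommDl !subrK.
have lowP := lead_monic_sub_deg_le lP; have lowQ := lead_monic_sub_deg_le lQ.
rewrite 3!mcoeffD (mcoeff_wcomm_deg_le lowP lowQ) ?(mcoeff_wcomm_deg_le lowP (degX gQ))
  ?(mcoeff_wcomm_deg_le (degX gP) lowQ) ?add0r; try lia.
by rewrite mcoeffB !wmulX.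
Qed.

End WeylProduct.

Section Words.
Variables (C : numClosedFieldType) (n : nat).
Implicit Types (m : seq (gen n)) (a b : 'I_n -> nat) (w : 'X_{1..n + n}).

Definition nmnm a b : 'X_{1..n + n} :=
  [multinom (match split i with inl j => a j | inr j => b j end) | i < n + n].

Lemma mcr_nmnm a b j : mcr (nmnm a b) j = a j.
Proof. by rewrite /mcr mnmE (unsplitK (inl j)). Qed.

Lemma man_nmnm a b j : man (nmnm a b) j = b j.
Proof. by rewrite /man mnmE (unsplitK (inr j)). Qed.

Lemma mdeg_nmnm a b : mdeg (nmnm a b) = (\sum_(j < n) a j + \sum_(j < n) b j)%N.
Proof.
rewrite mdeg_split; congr (_ + _)%N; apply: eq_bigr => j _;
  [exact: mcr_nmnm | exact: man_nmnm].
Qed.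

Lemma eq_nmnm a b a' b' : a =1 a' -> b =1 b' -> nmnm a b = nmnm a' b'.
Proof. by move=> eq_a eq_b; apply/mnmP => i; rewrite !mnmE; case: split. Qed.

Lemma nmnm_mcr_man w : w = nmnm (mcr w) (man w).
Proof.
by apply/mnmP => i; rewrite mnmE -[i]splitK; case: (split i) => j; rewrite unsplitK.
Qed.

Lemma nmnmD a b a' b' :
  (nmnm a b + nmnm a' b')%MM = nmnm (fun j => a j + a' j)%N (fun j => b j + b' j)%N.
Proof.
by rewrite [LHS]nmnm_mcr_man; apply: eq_nmnm => j; rewrite ?mcrD ?manD ?mcr_nmnm ?man_nmnm.
Qed.

Lemma lower_mode_nmnm k a b :
  lower_mode k (nmnm a b) = nmnm (fun j => a j - (j == k))%N (fun j => b j - (j == k))%N.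
Proof.
by apply/mnmP => i; rewrite !mnmE -[i]splitK; case: (split i) => j;
  rewrite unsplitK ?mode_lshift ?mode_rshift.
Qed.

Definition gen_mnm (g : gen n) : 'X_{1..n + n} :=
  match g with Cr j => U_(lshift n j) | An j => U_(rshift n j) end.

Lemma gen_valE g : gen_val C g = 'X_[gen_mnm g].
Proof. by case: g. Qed.

Lemma mdeg_cr_cons g m j : mdeg_cr (g :: m) j = (mcr (gen_mnm g) j + mdeg_cr m j)%N.
Proof. by case: g => i; rewrite /mcr /= mnm1E ?eq_lshift ?eq_rlshift. Qed.

Lemma mdeg_an_cons g m j : mdeg_an (g :: m) j = (man (gen_mnm g) j + mdeg_an m j)%N.
Proof. by case: g => i; rewrite /man /= mnm1E ?eq_rshift ?eq_lrshift. Qed.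

Definition word_mnm m := nmnm (mdeg_cr m) (mdeg_an m).

Lemma word_mnm_nil : word_mnm [::] = 0%MM.
Proof. by apply/mnmP => i; rewrite mnmE mnm0E; case: split. Qed.

Lemma word_mnm_cons g m : word_mnm (g :: m) = (gen_mnm g + word_mnm m)%MM.
Proof.
rewrite [RHS]nmnm_mcr_man; apply: eq_nmnm => j.
  by rewrite mdeg_cr_cons mcrD mcr_nmnm.
by rewrite mdeg_an_cons manD man_nmnm.
Qed.

Lemma word_val_lead m : lead_monic (word_val C m) (word_mnm m).
Proof.
elim: m => [|g m [Pg Pw]] /=.
  by rewrite word_mnm_nil; split=> [|w /negbTE nw _]; rewrite mcoeff1 ?eqxx ?nw.
rewrite word_mnm_cons gen_valE; set P := word_val C m; set g0 := word_mnm m.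
have lt_g0 v : v \in msupp P -> v != g0 -> (mdeg v < mdeg g0)%N.
  move=> Pv nv; rewrite ltnNge; apply: contraTN Pv => /(Pw v nv) P0.
  by rewrite mcoeff_msupp P0 eqxx.
split => [|w nw hw]; rewrite mcoeff_wmulX.
  rewrite (bigD1_seq g0) ?msupp_uniq ?mcoeff_msupp ?Pg ?oner_neq0 //= mul1r.
  rewrite mcoeff_mono_mul_lead ?eqxx ?mdegD // big1_seq ?addr0 // => v /andP[nv Pv].
  rewrite mcoeff_mono_mul_lead ?eqm_add2l ?(negbTE nv) ?mulr0 //.
  by have := lt_g0 v Pv nv; rewrite mdegD; lia.
rewrite big1_seq // => v /andP[_ Pv]; move: hw; rewrite mdegD => hw.
have [-> | nv] := eqVneq v g0.
  by rewrite mcoeff_mono_mul_lead ?[_ == w]eq_sym ?(negbTE nw) ?mulr0 //; lia.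
have lt_v := lt_g0 v Pv nv.
rewrite mcoeff_mono_mul_lead; last lia.
by case: eqP => [e | _]; [move: hw; rewrite -e mdegD; lia | rewrite mulr0].
Qed.

Lemma word_val_charge m w : (word_val C m)@_w != 0 ->
  forall j, (mcr w j + mdeg_an m j = man w j + mdeg_cr m j)%N.
Proof.
elim: m w => [|g m IH] w.
  rewrite /= mcoeff1; have [-> _ j | _] := eqVneq w 0%MM; last by rewrite eqxx.
  by rewrite /mcr /man !mnm0E.
move=> nz j; rewrite mdeg_cr_cons mdeg_an_cons; apply/eqP; apply: contraNT nz => charge.
rewrite /= gen_valE mcoeff_wmulX big1_seq // => v /andP[_ Pv].
have [-> | nzv] := eqVneq ((mono_mul C (gen_mnm g) v)@_w) 0; first by rewrite mulr0.
move: Pv; rewrite mcoeff_msupp => /IH /(_ j) IHv.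
have := mono_mul_charge nzv j; move: charge IHv; lia.
Qed.

Lemma mdeg_cr_adj m j : mdeg_cr (word_adj m) j = mdeg_an m j.
Proof. by rewrite /mdeg_cr /mdeg_an /word_adj count_rev count_map; apply: eq_count => -[]. Qed.

Lemma mdeg_an_adj m j : mdeg_an (word_adj m) j = mdeg_cr m j.
Proof. by rewrite /mdeg_cr /mdeg_an /word_adj count_rev count_map; apply: eq_count => -[]. Qed.

Lemma word_mnm_adj m : word_mnm (word_adj m) = nmnm (mdeg_an m) (mdeg_cr m).
Proof. exact: eq_nmnm (mdeg_cr_adj m) (mdeg_an_adj m). Qed.

Lemma mdeg_word_mnm_adj m : mdeg (word_mnm (word_adj m)) = mdeg (word_mnm m).
Proof. by rewrite word_mnm_adj !mdeg_nmnm addnC. Qed.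

Lemma word_val_supp_diag m :
  (forall j, mdeg_cr m j = mdeg_an m j) -> supp_diag (word_val C m).
Proof. by move=> dm w /word_val_charge charge j; have := charge j; rewrite dm; lia. Qed.

End Words.

Section Degree.
Variables (C : numClosedFieldType) (n : nat).
Implicit Types (P : W C n) (w : 'X_{1..n + n}).

Lemma wdeg_mdeg P w0 : P@_w0 != 0 -> deg_le P (mdeg w0) -> wdeg P = Some (mdeg w0).
Proof.
move=> Pw0 hP; have nzP : P != 0 by apply: contraNneq Pw0 => ->; rewrite mcoeff0.
have sz0 : (0 < msize P)%N by rewrite lt0n msize_poly_eq0.
rewrite /wdeg (negbTE nzP); congr Some; apply/eqP; rewrite -eqSS prednK //.
rewrite eqn_leq msize_mdeg_lt ?mcoeff_msupp // andbT msizeE.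
by apply/bigmax_leqP_seq => u Pu _; rewrite ltnS (msupp_deg_le hP Pu).
Qed.

Lemma wdeg_lt_mcoeff P d : (forall w, (d <= mdeg w)%N -> P@_w = 0) -> wdeg_lt P d.
Proof.
move=> hP; rewrite /wdeg_lt /wdeg; case: eqP => // /eqP nzP.
have : (msize P <= d)%N.
  rewrite msizeE; apply/bigmax_leqP_seq => u; rewrite mcoeff_msupp => Pu _.
  by rewrite leqNgt ltnS; apply: contra Pu => /hP ->.
by rewrite -ltnS prednK // lt0n msize_poly_eq0.
Qed.

End Degree.
Section Commutator.
Variables (C : numClosedFieldType) (n : nat) (m : seq (gen n)).
Local Notation al := (mdeg_cr m).
Local Notation be := (mdeg_an m).
Local Notation A := (word_val C (word_adj m)).
Local Notation B := (word_val C m).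
Local Notation D := (mdeg (word_mnm m)).

Lemma wcomm_gplus_gminus_diag : (forall j, al j = be j) ->
  wcomm (gplus C m) (gminus C m) = 0.
Proof.
move=> diag; have dB := word_val_supp_diag diag.
have dA : supp_diag A.
  by apply: word_val_supp_diag => j; rewrite mdeg_cr_adj mdeg_an_adj.
rewrite /gplus /gminus wcomm_plus_minus -[wmul B A - _]/(wcomm B A).
by rewrite wcomm_supp_diag // mul0rn scaler0.
Qed.

Definition corr_exp (k j : 'I_n) : nat := (al j + be j - (j == k))%N.
Local Notation corr_mnm k := (nmnm (corr_exp k) (corr_exp k)).

Definition wcomm_corr : W C n :=
  \sum_(k < n) ((((al k) ^ 2)%:R - ((be k) ^ 2)%:R) *: nbasis C (corr_exp k) (corr_exp k)).

Lemma mcoeff_wcomm_corr w : wcomm_corr@_w =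
  \sum_(k < n) (((al k) ^ 2)%:R - ((be k) ^ 2)%:R) * (corr_mnm k == w)%:R.
Proof. by rewrite raddf_sum; apply: eq_bigr => k _; rewrite /= mcoeffZ mcoeffX. Qed.

Lemma lower_mode_lead k :
  lower_mode k (word_mnm m + word_mnm (word_adj m))%MM = corr_mnm k.
Proof.
rewrite word_mnm_adj /word_mnm nmnmD lower_mode_nmnm.
by apply: eq_nmnm => j; rewrite /corr_exp // addnC.
Qed.

Lemma mcoeff_wcomm_top w : (0 < D)%N -> (D + D <= (mdeg w).+2)%N ->
  (wcomm (gplus C m) (gminus C m))@_w = - (2 * 'i) * wcomm_corr@_w.
Proof.
move=> D0 hw; have lA := word_val_lead C (word_adj m); have lB := word_val_lead C m.
rewrite /gplus /gminus wcomm_plus_minus -[wmul B A - _]/(wcomm B A) mcoeffZ mcoeffMn.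
rewrite (mcoeff_wcomm_lead lB lA) ?mdeg_word_mnm_adj //.
rewrite mcoeff_mono_mul_comm ?mdeg_word_mnm_adj // mcoeff_wcomm_corr.
have -> : \sum_(j < n) (lower_mode j (word_mnm m + word_mnm (word_adj m))%MM == w)%:R *
    ((man (word_mnm m) j * mcr (word_mnm (word_adj m)) j)%:R -
     (man (word_mnm (word_adj m)) j * mcr (word_mnm m) j)%:R) =
  - \sum_(k < n) (((al k) ^ 2)%:R - ((be k) ^ 2)%:R : C) * (corr_mnm k == w)%:R.
  rewrite -sumrN; apply: eq_bigr => k _.
  rewrite lower_mode_lead word_mnm_adj !mcr_nmnm !man_nmnm !mulnn.
  by rewrite mulrC -mulNr opprB.
by rewrite -mulr_natl; ring.
Qed.

Lemma mdeg_corr_mnm k : (0 < al k + be k)%N -> (mdeg (corr_mnm k) + 2 = D + D)%N.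
Proof.
move=> xk; have := @sum_sub_delta n (fun j => al j + be j)%N k xk.
rewrite /word_mnm !mdeg_nmnm /corr_exp big_split /=.
lia.
Qed.

Lemma corr_mnm_inj k j : (0 < al j + be j)%N -> corr_mnm k = corr_mnm j -> k = j.
Proof.
move=> xj /(congr1 (fun u => mcr u j)); rewrite !mcr_nmnm /corr_exp eqxx.
have [-> // | /negbTE njk] := eqVneq j k.
by change (nat_of_bool false) with 0%N; change (nat_of_bool true) with 1%N; lia.
Qed.

Lemma mcoeff_wcomm_corr_high w : (D + D <= (mdeg w).+1)%N -> wcomm_corr@_w = 0.
Proof.
move=> hw; rewrite mcoeff_wcomm_corr big1 // => k _.
have [/eqP | xk] := posnP (al k + be k).
  by rewrite addn_eq0 => /andP[/eqP-> /eqP->]; rewrite subrr mul0r.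
case: eqP => [e | _]; last by rewrite mulr0.
by have := mdeg_corr_mnm xk; rewrite e; lia.
Qed.

Section NonDiagonal.
Variable j0 : 'I_n.
Hypothesis al_neq_be : al j0 != be j0.

Lemma al_be_gt0 : (0 < al j0 + be j0)%N.
Proof. by rewrite lt0n addn_eq0; apply: contra al_neq_be => /andP[/eqP-> /eqP->]. Qed.

Lemma word_mnm_gt0 : (0 < D)%N.
Proof.
have := mcr_le_mdeg (word_mnm m) j0; have := man_le_mdeg (word_mnm m) j0.
by rewrite mcr_nmnm man_nmnm; have := al_be_gt0; lia.
Qed.

Lemma word_mnm_adj_neq : word_mnm (word_adj m) != word_mnm m.
Proof.
apply: contra al_neq_be => /eqP /(congr1 (fun u => mcr u j0)).
by rewrite word_mnm_adj !mcr_nmnm => ->.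
Qed.

Lemma mcoeff_word_val_adj_lead : A@_(word_mnm m) = 0.
Proof.
have [_ Aw] := word_val_lead C (word_adj m).
by rewrite Aw ?mdeg_word_mnm_adj // eq_sym word_mnm_adj_neq.
Qed.

Lemma wdeg_gplus : wdeg (gplus C m) = Some D.
Proof.
have [Bg _] := word_val_lead C m; have hA := lead_monic_deg_le (word_val_lead C (word_adj m)).
apply: wdeg_mdeg => [|w hw]; rewrite mcoeffZ mcoeffD.
  by rewrite mcoeff_word_val_adj_lead Bg add0r mulr1 neq0Ci.
by rewrite (lead_monic_deg_le (word_val_lead C m)) ?hA ?mdeg_word_mnm_adj // addr0 mulr0.
Qed.

Lemma wdeg_gminus : wdeg (gminus C m) = Some D.
Proof.
have [Bg _] := word_val_lead C m; have hA := lead_monic_deg_le (word_val_lead C (word_adj m)).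
apply: wdeg_mdeg => [|w hw]; rewrite mcoeffB.
  by rewrite mcoeff_word_val_adj_lead Bg sub0r oppr_eq0 oner_neq0.
by rewrite (lead_monic_deg_le (word_val_lead C m)) ?hA ?mdeg_word_mnm_adj // subr0.
Qed.

Lemma wdeg_wcomm_gplus_gminus :
  wdeg (wcomm (gplus C m) (gminus C m)) = Some (mdeg (corr_mnm j0)).
Proof.
have D0 := word_mnm_gt0; have deg_j0 := mdeg_corr_mnm al_be_gt0.
apply: wdeg_mdeg => [|w hw].
  rewrite mcoeff_wcomm_top //; last lia.
  apply: mulf_neq0; first by rewrite oppr_eq0 mulf_neq0 ?pnatr_eq0 ?neq0Ci.
  rewrite mcoeff_wcomm_corr (bigD1 j0) //= eqxx mulr1 big1 => [|k nk]; last first.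
    case: eqP => [/(corr_mnm_inj al_be_gt0) ek | _]; last by rewrite mulr0.
    by rewrite ek eqxx in nk.
  by rewrite addr0 subr_eq0 eqr_nat eqn_exp2r.
rewrite mcoeff_wcomm_top ?mcoeff_wcomm_corr_high ?mulr0 //; lia.
Qed.

Lemma wdeg_lt_wcomm_corr :
  wdeg_lt (wcomm (gplus C m) (gminus C m) + (2 * 'i) *: wcomm_corr) (mdeg (corr_mnm j0)).
Proof.
have D0 := word_mnm_gt0; have deg_j0 := mdeg_corr_mnm al_be_gt0.
apply: wdeg_lt_mcoeff => w hw; rewrite mcoeffD mcoeffZ mcoeff_wcomm_top //; last lia.
by rewrite mulNr addNr.
Qed.

End NonDiagonal.

End Commutator.

Theorem lemma8 (C : numClosedFieldType) (n : nat) (m : seq (gen n)) :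
  let gp := gplus C m in
  let gm := gminus C m in
  let al := mdeg_cr m in
  let be := mdeg_an m in
  (wcomm gp gm = 0 <-> (forall j, al j = be j)) /\
  (wcomm gp gm <> 0 ->
   exists dp dm d : nat,
     wdeg gp = Some dp /\ wdeg gm = Some dm /\
     wdeg (wcomm gp gm) = Some d /\ (d + 2 = dp + dm)%N /\
     wdeg_lt
       (wcomm gp gm +
        (2 * 'i) *: \sum_(k < n)
           ((((al k) ^ 2)%:R - ((be k) ^ 2)%:R) *:
              nbasis C (fun j => al j + be j - (j == k))%N
                       (fun j => al j + be j - (j == k))%N))
       d).
Proof.
cbv zeta.
have [diag | [j0 nd]] : (forall j, mdeg_cr m j = mdeg_an m j) \/
                        exists j0, mdeg_cr m j0 != mdeg_an m j0.
- case: (boolP [forall j, mdeg_cr m j == mdeg_an m j]) => [/forallP diag | ].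
    by left => j; apply/eqP.
  by rewrite negb_forall => /existsP; right.
- have comm0 := wcomm_gplus_gminus_diag C diag.
  by split; [by [] | move/(_ comm0)].
have comm_deg := wdeg_wcomm_gplus_gminus C nd.
split.
  split=> [comm0 | diag]; last by rewrite diag eqxx in nd.
  by move: comm_deg; rewrite /wdeg comm0 eqxx.
move=> _; have dp := wdeg_gplus C nd; have dm := wdeg_gminus C nd.
have d2 := mdeg_corr_mnm (al_be_gt0 nd); have corr := wdeg_lt_wcomm_corr C nd.
by exists (mdeg (word_mnm m)), (mdeg (word_mnm m)),
  (mdeg (nmnm (corr_exp m j0) (corr_exp m j0))).
Qed.
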